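(* Let $(H,\eta)$ be a rigid extended strip decomposition of an $n$-vertex graph $G$. Then $|E(H)|\leq n$ and $|V(H)|\leq 2n$.
   Context: All graphs are finite and simple. $T(H)$ denotes the set of triangles of $H$, a triangle on $x,y,z$ written $xyz$. Two vertex sets are complete to each other if every vertex of one is adjacent to every vertex of the other. An extended strip decomposition of a graph $G$ is a pair $(H,\eta)$ where $H$ is a simple graph and $\eta$ assigns: a set $\eta(x)\subseteq V(G)$ to each $x\in V(H)$; a set $\eta(xy)\subseteq V(G)$ to each $xy\in E(H)$, together with subsets $\eta(xy,x),\eta(xy,y)\subseteq \eta(xy)$; and a set $\eta(xyz)\subseteq V(G)$ to each $xyz\in T(H)$; such that (1) the sets $\eta(o)$, $o\in V(H)\cup E(H)\cup T(H)$, are pairwise disjoint (possibly empty) and their union is $V(G)$; (2) for every $x\in V(H)$ and distinct $y,z\in N_H(x)$, $\eta(xy,x)$ is complete to $\eta(xz,x)$; (3) every edge $uv\in E(G)$ either has both ends in one set $\eta(o)$, or $u\in\eta(xy,x)$, $v\in\eta(xz,x)$ for some $x\in V(H)$ and $y,z\in N_H(x)$, or $u\in\eta(xy,x)$, $v\in\eta(x)$ for some $xy\in E(H)$, or $u\in\eta(xyz)$, $v\in\eta(xy,x)\cap\eta(xy,y)$ for some $xyz\in T(H)$. It is rigid if $\eta(xy,x)\neq\emptyset$ for every edge $xy\in E(H)$ (for both ends $x$ of the edge), and $\eta(x)\neq\emptyset$ for every isolated vertex $x$ of $H$. *)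

From mathcomp Require Import all_boot.
Set Implicit Arguments. Unset Strict Implicit. Unset Printing Implicit Defensive.

Definition simple_graph (T : finType) (e : rel T) : Prop :=
  symmetric e /\ irreflexive e.

Section ESD.
Variables (V W : finType) (eG : rel V) (eH : rel W).

Definition Hedges : {set {set W}} :=
  [set e : {set W} | [exists x, exists y, eH x y && (e == [set x; y])]].

Definition Htris : {set {set W}} :=
  [set t : {set W} | [exists x, exists y, exists z,
      [&& eH x y, eH y z, eH x z & t == [set x; y; z]]]].

Definition complete_to (A B : {set V}) : Prop :=
  forall a b, a \in A -> b \in B -> eG a b.

(* eta(x) = etaV x; eta(e) = etaE e; eta(e, x) = etaEnd e x; eta(t) = etaT t *)
Variables (etaV : W -> {set V}) (etaE : {set W} -> {set V})
          (etaEnd : {set W} -> W -> {set V}) (etaT : {set W} -> {set V}).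

(* an edge uv of G is accounted for by condition (3) with u, v in this order *)
Definition edge_ok (u v : V) : Prop :=
  (exists x, u \in etaV x /\ v \in etaV x) \/
  (exists e, e \in Hedges /\ u \in etaE e /\ v \in etaE e) \/
  (exists t, t \in Htris /\ u \in etaT t /\ v \in etaT t) \/
  (exists x y z, eH x y /\ eH x z /\
      u \in etaEnd [set x; y] x /\ v \in etaEnd [set x; z] x) \/
  (exists x y, eH x y /\ u \in etaEnd [set x; y] x /\ v \in etaV x) \/
  (exists x y z, [set x; y; z] \in Htris /\ u \in etaT [set x; y; z] /\
      v \in etaEnd [set x; y] x :&: etaEnd [set x; y] y).

Definition is_ext_strip_decomposition : Prop :=
  (forall x y, eH x y -> etaEnd [set x; y] x \subset etaE [set x; y]) /\
  (forall x y, x != y -> [disjoint etaV x & etaV y]) /\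
  (forall e f, e \in Hedges -> f \in Hedges -> e != f -> [disjoint etaE e & etaE f]) /\
  (forall s t, s \in Htris -> t \in Htris -> s != t -> [disjoint etaT s & etaT t]) /\
  (forall x e, e \in Hedges -> [disjoint etaV x & etaE e]) /\
  (forall x t, t \in Htris -> [disjoint etaV x & etaT t]) /\
  (forall e t, e \in Hedges -> t \in Htris -> [disjoint etaE e & etaT t]) /\
  (forall v : V, (exists x, v \in etaV x) \/
                 (exists e, e \in Hedges /\ v \in etaE e) \/
                 (exists t, t \in Htris /\ v \in etaT t)) /\
  (forall x y z, eH x y -> eH x z -> y != z ->
     complete_to (etaEnd [set x; y] x) (etaEnd [set x; z] x)) /\
  (forall u v, eG u v -> edge_ok u v \/ edge_ok v u).

Definition rigid : Prop :=
  (forall x y, eH x y -> etaEnd [set x; y] x != set0) /\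
  (forall x, (forall y, ~~ eH x y) -> etaV x != set0).

End ESD.

(** Every edge [xy] of [H] owns the set [eta(xy)], which contains the
    nonempty set [eta(xy,x)], and every isolated vertex [x] owns the nonempty
    set [eta(x)].  These sets are pairwise disjoint subsets of [V(G)], so the
    edges and isolated vertices of [H] together number at most [n].  Every
    other vertex of [H] lies in one of the edges, each of which has at most
    two ends, so [|V(H)| <= |iso(H)| + 2 |E(H)| <= 2 n]. *)

From mathcomp Require Import all_boot zify.

Set Implicit Arguments.
Unset Strict Implicit.
Unset Printing Implicit Defensive.

Section DisjointFamilies.
Variables (I T : finType) (P : {pred I}) (F : I -> {set T}).

Lemma card_bigcup_le : #|\bigcup_(i in P) F i| <= \sum_(i in P) #|F i|.
Proof.
elim/big_rec2: _ => [|i n U _ leUn]; first by rewrite cards0.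
by rewrite (leq_trans (leq_card_setU (F i) U).1) ?leq_add2l.
Qed.

Lemma card_le_bigcup_disjoint :
  {in P, forall i, F i != set0} ->
  {in P &, forall i j, i != j -> [disjoint F i & F j]} ->
  #|P| <= #|\bigcup_(i in P) F i|.
Proof.
move=> F_neq0 F_disj; pose rep i := [pick x in F i].
have repP i : i \in P -> exists2 x, rep i = Some x & x \in F i.
  move=> Pi; rewrite /rep; case: pickP => [x Fx | noF]; first by exists x.
  by case/set0Pn: (F_neq0 i Pi) => x; rewrite noF.
have rep_inj : {in P &, injective rep}.
  move=> i j Pi Pj eq_rep; apply: contraTeq isT => neq_ij.
  have [x rep_i Fix] := repP i Pi; have [y rep_j Fjy] := repP j Pj.
  move: eq_rep Fjy; rewrite rep_i rep_j => -[<-].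
  by rewrite (disjointFr (F_disj i j Pi Pj neq_ij) Fix).
rewrite -(card_in_imset rep_inj) -(card_imset (\bigcup_(i in P) F i) Some_inj).
apply: subset_leq_card; apply/subsetP => _ /imsetP[i Pi ->].
have [x -> Fix] := repP i Pi.
by apply/imsetP; exists x => //; apply/bigcupP; exists i.
Qed.

End DisjointFamilies.

Section HedgesTheory.
Variables (W : finType) (eH : rel W).

Definition isolated : {set W} := [set x | [forall y, ~~ eH x y]].

Lemma HedgesP e :
  reflect (exists x y, eH x y /\ e = [set x; y]) (e \in Hedges eH).
Proof.
rewrite inE; apply: (iffP existsP) => [[x /existsP[y /andP[xy /eqP ->]]] |].
  by exists x, y.
by case=> x [y [xy ->]]; exists x; apply/existsP; exists y; rewrite xy eqxx.
Qed.

Lemma mem_Hedges x y : eH x y -> [set x; y] \in Hedges eH.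
Proof. by move=> xy; apply/HedgesP; exists x, y. Qed.

Lemma card_Hedge_le2 e : e \in Hedges eH -> #|e| <= 2.
Proof. by case/HedgesP=> x [y [_ ->]]; rewrite cards2 ltnS leq_b1. Qed.

Lemma card_non_isolated : #|~: isolated| <= 2 * #|Hedges eH|.
Proof.
have cover_non_isolated : ~: isolated \subset \bigcup_(e in Hedges eH) e.
  apply/subsetP => x; rewrite !inE negb_forall => /existsP[y /negPn xy].
  by apply/bigcupP; exists [set x; y]; rewrite ?mem_Hedges // !inE eqxx.
rewrite (leq_trans (subset_leq_card cover_non_isolated)) //.
rewrite (leq_trans (card_bigcup_le _ _)) // mulnC -sum_nat_const.
exact: leq_sum card_Hedge_le2.
Qed.

End HedgesTheory.

Section RigidStripDecomposition.
Variables (V W : finType) (eG : rel V) (eH : rel W).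
Variables (etaV : W -> {set V}) (etaE : {set W} -> {set V})
          (etaEnd : {set W} -> W -> {set V}) (etaT : {set W} -> {set V}).
Hypothesis esd : is_ext_strip_decomposition eG eH etaV etaE etaEnd etaT.
Hypothesis rig : rigid eH etaV etaEnd.

Lemma etaE_neq0 e : e \in Hedges eH -> etaE e != set0.
Proof.
case/HedgesP=> x [y [xy ->]]; have [etaEnd_sub _] := esd.
have /set0Pn[v v_end] := rig.1 x y xy.
by apply/set0Pn; exists v; apply: subsetP (etaEnd_sub x y xy) v v_end.
Qed.

Lemma etaV_isolated_neq0 x : x \in isolated eH -> etaV x != set0.
Proof. by rewrite inE => /forallP; apply: rig.2. Qed.

Lemma card_isolated_Hedges : #|isolated eH| + #|Hedges eH| <= #|V|.
Proof.
have [_ [disjV [disjE [_ [disjVE _]]]]] := esd.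
set UV := \bigcup_(x in isolated eH) etaV x.
set UE := \bigcup_(e in Hedges eH) etaE e.
have cardUV : #|isolated eH| <= #|UV|.
  by apply: card_le_bigcup_disjoint etaV_isolated_neq0 _ => x y _ _; apply: disjV.
have cardUE : #|Hedges eH| <= #|UE|.
  exact: card_le_bigcup_disjoint etaE_neq0 disjE.
have disjUVE : [disjoint UV & UE].
  apply: bigcup_disjoint => e Ee; rewrite disjoint_sym.
  by apply: bigcup_disjoint => x _; rewrite disjoint_sym disjVE.
apply: leq_trans (leq_add cardUV cardUE) _.
by rewrite -[_ + _]subn0 -(cards0 V) -(disjoint_setI0 disjUVE) -cardsU max_card.
Qed.

End RigidStripDecomposition.

Theorem mainTheorem4 (V W : finType) (eG : rel V) (eH : rel W)
  (etaV : W -> {set V}) (etaE : {set W} -> {set V})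
  (etaEnd : {set W} -> W -> {set V}) (etaT : {set W} -> {set V}) :
  simple_graph eG -> simple_graph eH ->
  is_ext_strip_decomposition eG eH etaV etaE etaEnd etaT ->
  rigid eH etaV etaEnd ->
  #|Hedges eH| <= #|V| /\ #|W| <= 2 * #|V|.
Proof.
move=> _ _ esd rig; have key := card_isolated_Hedges esd rig.
split; first exact: leq_trans (leq_addl _ _) key.
have := card_non_isolated eH; rewrite -(cardsC (isolated eH)); lia.
Qed.
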